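(* Let $S$ be a spray, $v\in\mathcal TM$ with $C_v\notin\mathcal H_v$. Let $g_1=\{B\in T^*_v(TM): B(C_v)=0,\ B|_{\mathcal H_v}=0\}$ and $g_2=\{B\in S^2T^*_v(TM): B(X,C_v)=0 \text{ and } B(X,Y)=0 \text{ for all } X\in T_v(TM),\ Y\in\mathcal H_v\}$ (the kernels of the symbol of $P^2_F=(\mathcal L_CE-2E,\ P_{\mathfrak h}E)$ and of its first prolongation). Then the symbol of $P^2_F$ is involutive at $v$: there is a basis $e_1,\dots,e_{2n}$ of $T_v(TM)$ such that $\dim g_2=\dim g_1+\sum_{j=1}^{2n}\dim\{B\in g_1: B(e_1)=\dots=B(e_j)=0\}$.
   Context: Let $M$ be a smooth $n$-manifold, $\mathcal{T}M=TM\setminus\{0\}$, $(x^i,y^i)$ induced coordinates on $TM$. A spray is $S=y^i\frac{\partial}{\partial x^i}+f^i(x,y)\frac{\partial}{\partial y^i}$ on $\mathcal TM$ with $f^i$ positively homogeneous of degree 2 in $y$. Put $\Gamma^i_j=-\frac12\frac{\partial f^i}{\partial y^j}$; horizontal vector fields are spanned by $h_i=\frac{\partial}{\partial x^i}-\Gamma^\alpha_i\frac{\partial}{\partial y^\alpha}$. $C=y^i\frac{\partial}{\partial y^i}$. The holonomy distribution $\mathcal H$ has fibre $\mathcal H_u$ spanned by the values at $u$ of all local horizontal vector fields and all their iterated Lie brackets. $\mathfrak h$ is a projection of $T(TM)$ onto $\mathcal H$ and $P_{\mathfrak h}E$ is the 1-form $X\mapsto(\mathfrak hX)(E)$. *)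

(* T_v(TM) is modelled as 'rV[R]_m (m = 2n) with a fixed basis;
   subspaces (e.g. the fibre H_v of the holonomy distribution) are represented
   mxalgebra-style by square matrices whose row space is the subspace.
   Covectors B in T*_v(TM) are row vectors b, with B(X) = X *m b^T.
   Bilinear forms B on T_v(TM) are matrices, with B(X,Y) = X *m B *m Y^T. *)
From mathcomp Require Import all_boot all_order all_algebra.
Set Implicit Arguments. Unset Strict Implicit. Unset Printing Implicit Defensive.
Import GRing.Theory.
Local Open Scope ring_scope.

Section Symbols.
Variables (R : fieldType) (m : nat).

Definition g1 (C : 'rV[R]_m) (H : 'M[R]_m) : 'M[R]_m :=
  kermx (col_mx C H)^T.

(* { B in g1 : B(e_1) = ... = B(e_j) = 0 }, e_i = i-th row of E (1-based) *)
Definition first_rows (E : 'M[R]_m) (j : nat) : 'M[R]_m :=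
  \matrix_(i < m) (if (i < j)%N then row i E else 0).

Definition g1_vanish (C : 'rV[R]_m) (H : 'M[R]_m) (E : 'M[R]_m) (j : nat)
  : 'M[R]_m :=
  kermx (col_mx C (col_mx H (first_rows E j)))^T.

(* Linear constraints defining g2 on a bilinear form B:
   symmetry (B - B^T = 0), B(X,C) = 0 and B(X,Y) = 0 for Y in H, all X. *)
Definition g2_constr (C : 'rV[R]_m) (H : 'M[R]_m) (B : 'M[R]_m)
  : 'M[R]_(m, m + (1 + m)) :=
  row_mx (B - B^T) (B *m (col_mx C H)^T).

(* g2, as a subspace of 'rV_(m*m) via the mxvec encoding of bilinear forms *)
Definition g2 (C : 'rV[R]_m) (H : 'M[R]_m) : 'M[R]_(m * m) :=
  kermx (lin_mx (g2_constr C H)).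

End Symbols.

(* Let W be the row space of C and H, r its rank and k = m - r.  Then g1 is the
   annihilator of W, of dimension k, and if the first k vectors e_1, ..., e_k of
   the basis span a complement of W, imposing B(e_1) = ... = B(e_j) = 0 leaves
   dimension k - min(j, k).  On the other side g2 is the space of symmetric forms
   killing W, i.e. the symmetric square of the annihilator, of dimension
   k(k+1)/2: in a basis adapted to W, and after replacing each strictly lower
   entry X_ab by X_ab - X_ba, it becomes the coordinate subspace spanned by the
   positions r <= a <= b.  Cartan's test then reduces to the identity
   k(k+1)/2 = k + sum_j (k - min(j, k)). *)

From HB Require Import structures.
From mathcomp Require Import all_boot all_order all_algebra.
From mathcomp Require Import all_classical all_reals.
From mathcomp Require Import zify ring.
Import GRing.Theory.

Lemma sum_subn_minn (k m : nat) :
  k <= m -> \sum_(j < m) (k - minn j.+1 k) = 'C(k, 2).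
Proof.
move=> le_km.
rewrite (eq_bigr (fun j : 'I_m => k - j.+1)) => [|j _]; last lia.
rewrite -(big_mkord xpredT (fun j => k - j.+1)) (big_cat_nat (leq0n k) le_km) /=.
rewrite [X in _ + X]big1_seq ?addn0 => [|j]; last first.
  by rewrite /= mem_index_iota => /andP[? _]; lia.
rewrite (big_nat_rev _ _ _ _ xpredT) -bin2_sum.
by apply: eq_big_nat => j /andP[_ lt_jk]; lia.
Qed.

Definition trailing_triu {m} (r : nat) : pred ('I_m * 'I_m) :=
  [pred p : 'I_m * 'I_m | r <= p.1 <= p.2].

Lemma card_trailing_triu (m r : nat) :
  r <= m -> #|@trailing_triu m r| = 'C((m - r).+1, 2).
Proof.
move=> le_rm.
have -> : #|@trailing_triu m r| =
    \sum_(a < m) \sum_(b < m) ((r <= a) && (a <= b) : nat).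
  rewrite -sum1_card pair_bigA big_mkcond.
  by apply: eq_bigr => p _; rewrite inE; case: (_ && _).
rewrite (eq_bigr (fun a : 'I_m => (r <= a) * (m - a))) => [|a _]; last first.
  case: (leqP r a) => _ /=; last by rewrite big1.
  rewrite mul1n -(big_mkord xpredT (fun b => (a <= b : nat))).
  rewrite (big_cat_nat (leq0n a) (ltnW (ltn_ord a))) /= big1_seq => [|b]; last first.
    by rewrite /= mem_index_iota => /andP[_ lt_ba]; rewrite leqNgt lt_ba.
  rewrite add0n -[m - a]muln1 -sum_nat_const_nat; apply: eq_big_nat => b.
  by move=> /andP[-> _].
rewrite -(big_mkord xpredT (fun a => (r <= a) * (m - a))).
rewrite (big_cat_nat (leq0n r) le_rm) /=.
rewrite big1_seq ?add0n => [|a]; last first.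
  by rewrite /= mem_index_iota => /andP[_ lt_ar]; rewrite leqNgt lt_ar.
rewrite (big_nat_rev _ _ _ _ xpredT) -bin2_sum big_nat_recl // add0n.
rewrite -{1}[r]add0n big_addn; apply: eq_big_nat => i /andP[_ lt_i]; lia.
Qed.

Local Open Scope ring_scope.

Section Annihilators.
Variables (R : fieldType) (m : nat).
Implicit Types (C : 'rV[R]_m) (H E : 'M[R]_m).

Lemma first_rowsE E j : first_rows E j = pid_mx j *m E.
Proof.
apply/row_matrixP => i; rewrite row_mul rowK [row i E]rowE.
case: ifP => lt_ij.
  by rewrite -row1; congr (_ *m E); apply/rowP => l; rewrite !mxE lt_ij andbT.
rewrite [row i _](_ : _ = 0) ?mul0mx //.
by apply/rowP => l; rewrite !mxE lt_ij andbF.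
Qed.

Lemma mxrank_g1 C H : \rank (g1 C H) = (m - \rank (col_mx C H))%N.
Proof. by rewrite mxrank_ker mxrank_tr. Qed.

Lemma mxrank_g1_vanish C H E j :
  \rank (g1_vanish C H E j) =
  (m - \rank (col_mx C H + (pid_mx j : 'M_m) *m E)%MS)%N.
Proof.
rewrite mxrank_ker mxrank_tr first_rowsE; congr (_ - _)%N.
rewrite -addsmxE -(adds_eqmx (eqmx_refl C) (addsmxE H _)) addsmxA.
by rewrite (adds_eqmx (addsmxE C H) (eqmx_refl _)).
Qed.

End Annihilators.

Lemma mxrank_adds_pid_compl (R : fieldType) (p m : nat) (W : 'M[R]_(p, m)) j :
  \rank (W + (pid_mx j : 'M_m) *m row_ebase (W^C)%MS)%MS =
  (\rank W + minn j (m - \rank W))%N.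
Proof.
set U := row_ebase (W^C)%MS; set k := \rank (W^C)%MS.
have rkC : k = (m - \rank W)%N by rewrite /k mxrank_compl.
have le_rm : (\rank W <= m)%N := rank_leq_col W.
have baseE : row_base (W^C)%MS = pid_mx k *m U by [].
have [le_jk | lt_kj] := leqP j k.
  have sub_compl : ((pid_mx j : 'M_m) *m U <= W^C)%MS.
    rewrite -(eq_row_base (W^C)%MS) baseE.
    have -> : pid_mx j = pid_mx j *m (pid_mx k : 'M[R]_(k, m)) :> 'M[R]_m.
      by rewrite mul_pid_mx; congr pid_mx; lia.
    by rewrite -mulmxA submxMl.
  have U_free : row_free U by rewrite row_free_unit row_ebase_unit.
  rewrite mxrank_disjoint_sum; last first.
    by apply/eqP; rewrite -submx0 -(capmx_compl W) capmxS.
  rewrite mxrankMfree // rank_pid_mx; lia.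
have W_compl_sub : (W^C <= (pid_mx j : 'M_m) *m U)%MS.
  rewrite -(eq_row_base (W^C)%MS) baseE.
  have -> : pid_mx k = (pid_mx k : 'M[R]_(k, m)) *m pid_mx j :> 'M[R]_(k, m).
    by rewrite mul_pid_mx; congr pid_mx; lia.
  by rewrite -mulmxA submxMl.
have /eqnP-> : row_full (W + (pid_mx j : 'M_m) *m U)%MS.
  rewrite -col_leq_rank.
  apply: leq_trans (mxrankS (addsmxS (submx_refl W) W_compl_sub)).
  by rewrite col_leq_rank addsmx_compl_full.
lia.
Qed.

Lemma mul_rV_lin_fun {R : fieldType} {m1 n1 m2 n2}
    (f : 'M[R]_(m1, n1) -> 'M[R]_(m2, n2)) :
  linear f -> forall u, u *m lin_mx f = mxvec (f (vec_mx u)).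
Proof.
move=> lin_f u.
exact: (mul_rV_lin (HB.pack f (GRing.isLinear.Build _ _ _ _ f lin_f)) u).
Qed.

Lemma sub_kermx_lin {R : fieldType} {m1 n1 m2 n2}
    (f : 'M[R]_(m1, n1) -> 'M[R]_(m2, n2)) :
  linear f -> forall p (K : 'M_(p, m1 * n1)),
  (K <= kermx (lin_mx f))%MS = [forall i, f (vec_mx (row i K)) == 0].
Proof.
move=> lin_f p K; apply/row_subP/forallP => [sub_K i | ker_K i].
  by have := sub_K i; rewrite sub_kermx mul_rV_lin_fun // mxvec_eq0.
by rewrite sub_kermx mul_rV_lin_fun // mxvec_eq0.
Qed.

Lemma mxrank_kermx_lin_le {R : fieldType} {m1 n1 m2 n2 m3 n3}
    {f : 'M[R]_(m1, n1) -> 'M[R]_(m2, n2)} {g : 'M[R]_(m1, n1) -> 'M[R]_(m3, n3)}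
    {phi psi : 'M[R]_(m1, n1) -> 'M[R]_(m1, n1)} :
  linear f -> linear g -> linear phi -> linear psi -> cancel phi psi ->
  (forall B, f B == 0 -> g (phi B) == 0) ->
  (\rank (kermx (lin_mx f)) <= \rank (kermx (lin_mx g)))%N.
Proof.
move=> lin_f lin_g lin_phi lin_psi phiK f_g.
have phi_free : row_free (lin_mx phi).
  apply/row_freeP; exists (lin_mx psi); apply/row_matrixP => i.
  by rewrite !rowE mulmx1 mulmxA !mul_rV_lin_fun // mxvecK phiK vec_mxK.
rewrite -(mxrankMfree _ phi_free) mxrankS // sub_kermx_lin //.
apply/forallP => i; rewrite row_mul mul_rV_lin_fun // mxvecK f_g //.
by have := submx_refl (kermx (lin_mx f)); rewrite sub_kermx_lin // => /forallP.
Qed.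

Lemma mxrank_kermx_lin_conj {R : fieldType} {m1 n1 m2 n2 m3 n3}
    {f : 'M[R]_(m1, n1) -> 'M[R]_(m2, n2)} {g : 'M[R]_(m1, n1) -> 'M[R]_(m3, n3)}
    {phi psi : 'M[R]_(m1, n1) -> 'M[R]_(m1, n1)} :
  linear f -> linear g -> linear phi -> linear psi ->
  cancel phi psi -> cancel psi phi ->
  (forall B, (f B == 0) = (g (phi B) == 0)) ->
  \rank (kermx (lin_mx f)) = \rank (kermx (lin_mx g)).
Proof.
move=> lin_f lin_g lin_phi lin_psi phiK psiK fg.
apply/eqP; rewrite eqn_leq; apply/andP; split.
  by apply: (mxrank_kermx_lin_le lin_f lin_g lin_phi lin_psi phiK) => B; rewrite fg.
by apply: (mxrank_kermx_lin_le lin_g lin_f lin_psi lin_phi psiK) => X; rewrite fg psiK.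
Qed.

Section Mask.
Context {R : fieldType} {m n : nat}.
Variable T : pred ('I_m * 'I_n).

Definition mask_mx (B : 'M[R]_(m, n)) : 'M[R]_(m, n) :=
  \matrix_(a, b) if T (a, b) then 0 else B a b.

Lemma mask_mx_is_linear : linear mask_mx.
Proof.
move=> k u v; apply/matrixP => a b.
by rewrite !mxE; case: (T _); rewrite ?mxE; ring.
Qed.

Lemma mxrank_ker_mask : \rank (kermx (lin_mx mask_mx)) = #|T|.
Proof.
pose S := (\sum_(p in T) <<'e_(mxvec_index p.1 p.2) : 'rV[R]_(m * n)>>)%MS.
have inj_index : {in T &, injective (fun p : 'I_m * 'I_n => mxvec_index p.1 p.2)}.
  by move=> [a b] [c d] _ _ /cast_ord_inj/enum_rank_inj.
have rankS : \rank S = #|T|.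
  move/mxdirectP: (mxdirect_delta R inj_index) => /= ->.
  by rewrite -sum1_card; apply: eq_bigr => p _; rewrite mxrank_gen mxrank_delta.
rewrite -rankS; apply/eqP; rewrite eqn_leq; apply/andP; split; apply: mxrankS.
  apply/row_subP => i; set u := row i _.
  have := submx_refl (kermx (lin_mx mask_mx)).
  rewrite sub_kermx_lin; last exact: mask_mx_is_linear.
  move=> /forallP/(_ i)/eqP/matrixP mask_u.
  rewrite -(vec_mxK u) (matrix_sum_delta (vec_mx u)) linear_sum.
  apply: summx_sub => a _.
  rewrite linear_sum; apply: summx_sub => b _; rewrite linearZ /= mxvec_delta.
  case Tab: (T (a, b)).
    by rewrite scalemx_sub // (sumsmx_sup (a, b)) ?genmxE.
  by have := mask_u a b; rewrite !mxE Tab => ->; rewrite scale0r sub0mx.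
apply/sumsmx_subP => p Tp; rewrite genmxE sub_kermx mul_rV_lin_fun ?mxvec_eq0.
  rewrite -mxvec_delta mxvecK; apply/eqP/matrixP => a b; rewrite !mxE.
  case: ifP => // Tab; case: eqP => [ea|] //; case: eqP => [eb|] //.
  by move: Tp; rewrite unfold_in [p]surjective_pairing -ea -eb Tab.
exact: mask_mx_is_linear.
Qed.

End Mask.

Lemma mulmx_pid_rect_eq0 (R : fieldType) q m p r (X : 'M[R]_(q, m)) :
  (r <= m)%N -> (r <= p)%N ->
  (X *m (pid_mx r : 'M_(m, p)) == 0) = (X *m (pid_mx r : 'M_m) == 0).
Proof.
move=> le_rm le_rp; apply/eqP/eqP => X0.
  have -> : pid_mx r = (pid_mx r : 'M_(m, p)) *m (pid_mx r : 'M_(p, m)) :> 'M[R]_m.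
    by rewrite mul_pid_mx; congr pid_mx; lia.
  by rewrite mulmxA X0 mul0mx.
have -> : pid_mx r = (pid_mx r : 'M_m) *m (pid_mx r : 'M_(m, p)) :> 'M[R]_(m, p).
  by rewrite mul_pid_mx; congr pid_mx; lia.
by rewrite mulmxA X0 mul0mx.
Qed.

Lemma mulmx_tr_ebase_eq0 (R : fieldType) p m (W : 'M[R]_(p, m)) (B : 'M[R]_m) :
  (B *m W^T == 0) =
  (row_ebase W *m B *m (row_ebase W)^T *m (pid_mx (\rank W) : 'M_m) == 0).
Proof.
have le_rm : (\rank W <= m)%N := rank_leq_col W.
have le_rp : (\rank W <= p)%N := rank_leq_row W.
rewrite -{1}(mulmx_ebase W) !trmx_mul tr_pid_mx !mulmxA.
rewrite mulmx_free_eq0 ?row_free_unit ?unitmx_tr ?col_ebase_unit //.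
rewrite mulmx_pid_rect_eq0 // -!mulmxA.
apply/eqP/eqP => [-> | ]; first by rewrite mulmx0.
move/(congr1 (mulmx (invmx (row_ebase W)))).
by rewrite mulmx0 mulKmx ?row_ebase_unit.
Qed.

Section CongruenceNormalForm.
Context {R : fieldType} {m : nat}.
Implicit Types (P B X : 'M[R]_m).

Definition congrmx P B := P *m B *m P^T.

(* Symmetry of X becomes the vanishing of the strictly lower part of
   lower_antisym X, which turns g2 into a coordinate subspace. *)
Definition lower_antisym X : 'M[R]_m :=
  \matrix_(a, b) if (a <= b)%N then X a b else X a b - X b a.

Definition lower_antisym_inv X : 'M[R]_m :=
  \matrix_(a, b) if (a <= b)%N then X a b else X a b + X b a.

Lemma congrmx_is_linear P : linear (congrmx P).
Proof.
by move=> k u v; rewrite /congrmx mulmxDr mulmxDl -scalemxAr -scalemxAl.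
Qed.

Lemma lower_antisym_is_linear : linear lower_antisym.
Proof.
move=> k u v; apply/matrixP => a b.
by rewrite !mxE; case: leqP => _; rewrite ?mxE; ring.
Qed.

Lemma lower_antisym_inv_is_linear : linear lower_antisym_inv.
Proof.
move=> k u v; apply/matrixP => a b.
by rewrite !mxE; case: leqP => _; rewrite ?mxE; ring.
Qed.

Lemma lower_antisymK : cancel lower_antisym lower_antisym_inv.
Proof.
move=> X; apply/matrixP => a b; rewrite !mxE.
by case: leqP => // lt_ba; rewrite ltnW //; ring.
Qed.

Lemma lower_antisym_invK : cancel lower_antisym_inv lower_antisym.
Proof.
move=> X; apply/matrixP => a b; rewrite !mxE.
by case: leqP => // lt_ba; rewrite ltnW //; ring.
Qed.

Lemma congrmxK {P} : P \in unitmx -> cancel (congrmx P) (congrmx (invmx P)).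
Proof.
move=> P_unit B; rewrite /congrmx -!mulmxA mulKmx //.
by rewrite -trmx_mul mulVmx // trmx1 mulmx1.
Qed.

Lemma congrmxVK {P} : P \in unitmx -> cancel (congrmx (invmx P)) (congrmx P).
Proof.
move=> P_unit B; rewrite /congrmx -!mulmxA mulKVmx //.
by rewrite -trmx_mul mulmxV // trmx1 mulmx1.
Qed.

Lemma trmx_congrmx P B : (congrmx P B)^T = congrmx P B^T.
Proof. by rewrite /congrmx !trmx_mul trmxK mulmxA. Qed.

Lemma mulmx_pidE p r (X : 'M[R]_(p, m)) a b :
  (X *m (pid_mx r : 'M_m)) a b = if (b < r)%N then X a b else 0.
Proof.
rewrite !mxE (bigD1 b) //= big1 ?addr0 => [|c ne_cb]; last first.
  by rewrite !mxE val_eqE (negbTE ne_cb) mulr0.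
by rewrite !mxE eqxx /=; case: ifP; rewrite ?mulr1 ?mulr0.
Qed.

Lemma mask_lower_antisym_eq0 r X :
  (mask_mx (trailing_triu r) (lower_antisym X) == 0) =
  (X == X^T) && (X *m (pid_mx r : 'M_m) == 0).
Proof.
have maskE (Y : 'M[R]_m) (a b : 'I_m) :
    mask_mx (trailing_triu r) Y a b = if (r <= a <= b)%N then 0 else Y a b.
  by rewrite mxE.
apply/eqP/andP => [/matrixP M0 | [/eqP/matrixP trX /eqP/matrixP X_pid]].
  have off (a b : 'I_m) : ~~ (r <= a <= b)%N -> lower_antisym X a b = 0.
    move=> out_ab; have := M0 a b.
    by rewrite maskE (negbTE out_ab) => ->; rewrite mxE.
  have symX (a b : 'I_m) : X a b = X b a.
    wlog lt_ba : a b / (b < a)%N.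
      move=> sym_lt; case: (ltngtP a b) => [/sym_lt|/sym_lt|/val_inj->] //.
    apply/eqP; rewrite -subr_eq0; have := off a b.
    by rewrite mxE (leqNgt a b) lt_ba /= andbF => /(_ isT) ->.
  split; first by apply/eqP/matrixP => a b; rewrite mxE.
  apply/eqP/matrixP => a b; rewrite mulmx_pidE mxE.
  case: ifP => // lt_br; case: (leqP a b) => [le_ab | lt_ba].
    have := off a b; rewrite mxE le_ab => -> //.
    by rewrite negb_and -ltnNge (leq_ltn_trans le_ab lt_br).
  rewrite symX; have := off b a.
  by rewrite mxE (ltnW lt_ba) negb_and -ltnNge lt_br => ->.
have symX (a b : 'I_m) : X a b = X b a by rewrite [LHS]trX mxE.
apply/matrixP => a b; rewrite maskE !mxE; case: ifP => // out_ab.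
case: leqP => [le_ab | lt_ba]; last by rewrite symX subrr.
have := X_pid b a; rewrite mulmx_pidE mxE -symX.
by move: out_ab; rewrite le_ab andbT ltnNge => /negbT ->.
Qed.

End CongruenceNormalForm.

Section Prolongation.
Variables (R : fieldType) (m : nat) (C : 'rV[R]_m) (H : 'M[R]_m).
Let W := col_mx C H.
Let P := row_ebase W.

Lemma g2_constr_is_linear : linear (g2_constr C H).
Proof.
move=> k u v; rewrite /g2_constr scale_row_mx add_row_mx.
congr row_mx; last by rewrite mulmxDl -scalemxAl.
by rewrite linearD linearZ /= scalerBr opprD addrACA.
Qed.

Lemma g2_constr_eq0 B :
  (g2_constr C H B == 0) =
  (mask_mx (trailing_triu (\rank W)) (lower_antisym (congrmx P B)) == 0).
Proof.
rewrite row_mx_eq0 mask_lower_antisym_eq0 mulmx_tr_ebase_eq0 -/P subr_eq0.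
by rewrite trmx_congrmx (inj_eq (can_inj (congrmxK (row_ebase_unit W)))).
Qed.

Lemma mxrank_g2 : \rank (g2 C H) = 'C((m - \rank W).+1, 2).
Proof.
have P_unit : P \in unitmx := row_ebase_unit W.
pose phi B := lower_antisym (congrmx P B).
pose psi X := congrmx (invmx P) (lower_antisym_inv X).
have phi_lin : linear phi.
  by move=> k u v; rewrite /phi congrmx_is_linear lower_antisym_is_linear.
have psi_lin : linear psi.
  by move=> k u v; rewrite /psi lower_antisym_inv_is_linear congrmx_is_linear.
have phiK : cancel phi psi.
  by move=> B; rewrite /phi /psi lower_antisymK congrmxK.
have psiK : cancel psi phi.
  by move=> X; rewrite /phi /psi congrmxVK ?lower_antisym_invK.
rewrite /g2 (mxrank_kermx_lin_conj g2_constr_is_linear (mask_mx_is_linear _)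
  phi_lin psi_lin phiK psiK g2_constr_eq0).
by rewrite mxrank_ker_mask card_trailing_triu ?rank_leq_col.
Qed.

End Prolongation.

Theorem mainTheorem5 (R : realType) (n : nat)
  (H : 'M[R]_(2 * n)) (C : 'rV[R]_(2 * n))
  (hC : ~~ (C <= H)%MS) :
  exists E : 'M[R]_(2 * n),
    E \in unitmx /\
    \rank (g2 C H) =
      (\rank (g1 C H) + \sum_(j < 2 * n) \rank (g1_vanish C H E j.+1))%N.
Proof.
set W := col_mx C H.
exists (row_ebase (W^C)%MS); split; first exact: row_ebase_unit.
rewrite mxrank_g2 mxrank_g1 -/W.
under eq_bigr do rewrite mxrank_g1_vanish -/W mxrank_adds_pid_compl subnDA.
by rewrite sum_subn_minn ?leq_subr // binS bin1 addnC.
Qed.
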